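(* Let $\gamma \in (\tfrac12, 1)$, $\mu_1,\mu_2 \in \mathbb{R}$, $\sigma_1,\sigma_2>0$, $\beta>0$, $\rho \in (\tfrac12,1)$ and $\Delta p \in \mathbb{R}$. Let $(X,Y)$ be a random pair with $P(Y=+1)=\gamma$, $P(Y=-1)=1-\gamma$, and conditional distributions $X \mid Y=-1 \sim \mathcal{N}(\mu_1,\sigma_1^2)$, $X \mid Y=+1 \sim \mathcal{N}(\mu_2,\sigma_2^2)$. Define the confidence score $$s(x) = \frac{1}{1+\exp\!\left(-\beta\left((x-\Delta p) - \frac{\mu_1+\mu_2}{2}\right)\right)},$$ and the pseudo-label $Y_{psl}$ by: $Y_{psl}=+1$ if $s(X)>\rho$, $Y_{psl}=-1$ if $s(X)<1-\rho$, and $Y_{psl}=0$ if $1-\rho \le s(X) \le \rho$. Then, with $\Phi$ the cumulative distribution function of the standard normal distribution, $$P(Y_{psl}=1) = \gamma\, \Phi\!\left(\frac{\frac{\mu_2-\mu_1}{2} - \frac{1}{\beta}\log\frac{\rho}{1-\rho} - \Delta p}{\sigma_2}\right) + (1-\gamma)\, \Phi\!\left(\frac{\frac{\mu_1-\mu_2}{2} - \frac{1}{\beta}\log\frac{\rho}{1-\rho} - \Delta p}{\sigma_1}\right),$$ $$P(Y_{psl}=-1) = (1-\gamma)\, \Phi\!\left(\frac{\frac{\mu_2-\mu_1}{2} - \frac{1}{\beta}\log\frac{\rho}{1-\rho} + \Delta p}{\sigma_1}\right) + \gamma\, \Phi\!\left(\frac{\frac{\mu_1-\mu_2}{2} - \frac{1}{\beta}\log\frac{\rho}{1-\rho}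 + \Delta p}{\sigma_2}\right),$$ $$P(Y_{psl}=0) = 1 - P(Y_{psl}=1) - P(Y_{psl}=-1).$$
   Context: This models pseudo-labeling in a binary semi-supervised classification problem: $\gamma$ is the proportion of the positive class in the unlabeled data, $\Delta p$ is a logit-adjustment amount, $\beta$ reflects the sharpness (confidence) of the classifier, and $\rho$ is a fixed confidence threshold; a pseudo-label of $0$ means the sample is masked (no pseudo-label assigned). *)

From HB Require Import structures.
From mathcomp Require Import all_boot all_order all_algebra.
From mathcomp Require Import all_classical all_reals all_analysis.
From mathcomp Require Import normal_distribution.
Set Implicit Arguments. Unset Strict Implicit. Unset Printing Implicit Defensive.
Import Order.TTheory GRing.Theory Num.Theory.
Local Open Scope classical_set_scope.
Local Open Scope ring_scope.

Definition Phi {R : realType} (x : R) : R :=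
  fine (normal_prob 0 1 `]-oo, x]).

(* Conditional law of X given Y = y is mu (for a discrete Y):
   P(X \in A, Y = y) = P(Y = y) * mu(A) for every Borel set A. *)
Definition cond_law {d : measure_display} {T : measurableType d} {R : realType}
  (P : probability T R) (X Y : T -> R) (y : R) (mu : set R -> \bar R) : Prop :=
  forall A : set R, measurable A ->
    P (X @^-1` A `&` Y @^-1` [set y]) = (P (Y @^-1` [set y]) * mu A)%E.

Definition score {R : realType} (beta dp mu1 mu2 : R) (x : R) : R :=
  1 / (1 + expR (- (beta * ((x - dp) - (mu1 + mu2) / 2)))).

Definition pseudo_label {R : realType} (beta dp mu1 mu2 rho : R) (x : R) : R :=
  let s := score beta dp mu1 mu2 x in
  if rho < s then 1 else if s < 1 - rho then -1 else 0.

(* The score is the logistic function of an affine function of x, so the two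
   confidence thresholds rho and 1 - rho become the thresholds
   dp + (mu1 + mu2) / 2 +- logit(rho) / beta on X itself.  Conditioning on Y,
   the law of X is the Gaussian mixture gamma N(mu2, sigma2^2) + (1 - gamma)
   N(mu1, sigma1^2), and Gaussian tails are standardized by an affine change
   of variables together with the symmetry of the standard normal density. *)
From HB Require Import structures.
From mathcomp Require Import all_boot all_order all_algebra.
From mathcomp Require Import all_classical all_reals all_analysis.
From mathcomp Require Import normal_distribution measurable_realfun.
From mathcomp Require Import ring lra.
Import Order.TTheory GRing.Theory Num.Theory.
Local Open Scope classical_set_scope.
Local Open Scope ring_scope.

Section standard_normal.
Context {R : realType}.
Implicit Types m s t c x : R.

Let affine_is_derive s m x : is_derive x 1 (fun y : R => s * y + m) s.
Proof. by apply: is_derive_eq; rewrite addr0 scaler1. Qed.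

Let derive1_affine s m : (fun y : R => s * y + m)^`()%classic = cst s.
Proof.
apply/funext => x; have := affine_is_derive s m x.
by rewrite derive1E => ?; rewrite derive_val.
Qed.

Let measurable_normal_pdf_on m s (A : set R) :
  measurable_fun A (fun x => (normal_pdf m s x)%:E).
Proof.
by apply/measurable_EFinP; exact: measurable_funS (measurable_normal_pdf m s).
Qed.

Lemma PhiE t : normal_prob 0 1 `]-oo, t] = (Phi t)%:E.
Proof. by rewrite /Phi fineK // fin_num_measure. Qed.

Lemma normal_pdf_affine m s x : 0 < s ->
  normal_pdf m s (s * x + m) * s = normal_pdf 0 1 x.
Proof.
move=> s_gt0; have s_neq0 : s != 0 by rewrite gt_eqF.
rewrite !normal_pdfE ?oner_eq0 //= /normal_peak /normal_fun.
rewrite addrK subr0 expr1n mul1r.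
have -> : - (s * x) ^+ 2 / (s ^+ 2 *+ 2) = - x ^+ 2 / 2.
  rewrite -[s ^+ 2 *+ 2]mulr_natr exprMn invfM mulNr [in RHS]mulNr; congr (- _).
  by rewrite mulrACA divff ?mul1r // sqrf_eq0.
have -> : Num.sqrt (s ^+ 2 * pi *+ 2) = s * Num.sqrt (pi *+ 2).
  by rewrite -mulrnAr sqrtrM ?sqr_ge0 // sqrtr_sqr gtr0_norm.
rewrite invfM (mulrC s^-1) -!mulrA; congr (_ * _).
by rewrite mulrCA mulVf // mulr1.
Qed.

Lemma normal_prob_itvNyc_affine m s t : 0 < s ->
  normal_prob m s `]-oo, s * t + m] = normal_prob 0 1 `]-oo, t].
Proof.
move=> s_gt0; rewrite /normal_prob.
have pdf_cont := @continuous_normal_pdf R m s (lt0r_neq0 s_gt0).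
rewrite (@increasing_ge0_integration_by_substitutionNy _ (fun y => s * y + m));
  rewrite ?derive1_affine.
- apply: eq_integral => x _.
  by rewrite !fctE /= normal_pdf_affine.
- by move=> x y _ _ xy; rewrite ltrD2r ltr_pM2l.
- by move=> x _; exact: cvg_cst.
- exact: is_cvg_cst.
- exact: cvg_cst.
- split; first by move=> x _; apply: ex_derive; exact: affine_is_derive.
  apply: cvg_at_left_filter; apply: cvgD; last exact: cvg_cst.
  by apply: cvgMr; exact: cvg_id.
- apply/cvgrNyPle => A; near=> x.
  by rewrite -lerBrDr -ler_pdivlMl.
- apply/continuous_within_itvNycP; split=> [x _|]; first exact: pdf_cont.
  by apply: cvg_at_left_filter; exact: pdf_cont.
- by move=> x _; exact: normal_pdf_ge0.
Unshelve. all: end_near. Qed.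

Lemma normal_prob_itvoy m s c :
  normal_prob m s `]c, +oo[ = (1 - normal_prob m s `]-oo, c])%E.
Proof. by rewrite -probability_setC // setCitvl. Qed.

Lemma normal_prob01_sym t :
  normal_prob 0 1 `]-oo, - t] = normal_prob 0 1 `[t, +oo[.
Proof.
rewrite /normal_prob ge0_integration_by_substitutionNy.
- apply: eq_integral => x _.
  by rewrite /= !normal_pdfE ?oner_eq0 //= /normal_fun !subr0 sqrrN.
- have pdf_cont := @continuous_normal_pdf R 0 1 (oner_neq0 R).
  apply/continuous_within_itvNycP; split=> [x _|]; first exact: pdf_cont.
  by apply: cvg_at_left_filter; exact: pdf_cont.
- by move=> x _; exact: normal_pdf_ge0.
Qed.

Lemma normal_prob_itvcy m s c :
  normal_prob m s `[c, +oo[ = normal_prob m s `]c, +oo[.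
Proof. by rewrite /normal_prob integral_itv_obnd_cbnd. Qed.

Lemma PhiN t : Phi (- t) = 1 - Phi t.
Proof.
apply: EFin_inj.
by rewrite EFinB -!PhiE normal_prob01_sym normal_prob_itvcy normal_prob_itvoy.
Qed.

Lemma normal_prob_le m s c : 0 < s ->
  normal_prob m s `]-oo, c] = (Phi ((c - m) / s))%:E.
Proof.
move=> s_gt0; rewrite -PhiE -(normal_prob_itvNyc_affine m s _ s_gt0).
by rewrite mulrCA divff ?gt_eqF // mulr1 subrK.
Qed.

Lemma normal_prob_lt m s c : 0 < s ->
  normal_prob m s `]-oo, c[ = (Phi ((c - m) / s))%:E.
Proof.
move=> s_gt0; rewrite /normal_prob integral_itv_bndo_bndc //.
exact: normal_prob_le.
Qed.

Lemma normal_prob_gt m s c : 0 < s ->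
  normal_prob m s `]c, +oo[ = (Phi ((m - c) / s))%:E.
Proof.
move=> s_gt0; rewrite normal_prob_itvoy normal_prob_le // -EFinB -PhiN.
by rewrite -mulNr opprB.
Qed.

End standard_normal.

Section total_probability.
Context {d} {T : measurableType d} {R : realType} (P : probability T R).

Lemma probability_split {A B S : set T} :
  measurable A -> measurable B -> measurable S ->
  A `&` B = set0 -> (P A + P B = 1)%E ->
  P S = (P (S `&` A) + P (S `&` B))%E.
Proof.
move=> mA mB mS AB0 PAB1.
have mAB := measurableU _ _ mA mB.
have PnotAB : P (~` (A `|` B)) = 0%E.
  by rewrite probability_setC // measureU // PAB1 subee.
rewrite (measureDI P mS mAB) [X in (X + _)%E](_ : _ = 0%E) ?add0e; last first.
  apply: subset_measure0 PnotAB => //; first exact: measurableD.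
  exact: measurableC.
rewrite setIUr measureU //; try exact: measurableI.
by rewrite setIACA AB0 setI0.
Qed.

Lemma cond_law_mixture {X Y : T -> R} {y1 y2 p : R} {nu1 nu2 : set R -> \bar R}
    {I : set R} :
  measurable_fun setT X -> measurable_fun setT Y -> y1 != y2 ->
  P (Y @^-1` [set y1]) = p%:E -> P (Y @^-1` [set y2]) = (1 - p)%:E ->
  cond_law P X Y y1 nu1 -> cond_law P X Y y2 nu2 -> measurable I ->
  P (X @^-1` I) = (p%:E * nu1 I + (1 - p)%:E * nu2 I)%E.
Proof.
move=> mX mY y12 PY1 PY2 law1 law2 mI.
have mYy y : measurable (Y @^-1` [set y]).
  by rewrite -[_ @^-1` _]setTI; exact: mY.
have mXI : measurable (X @^-1` I) by rewrite -[_ @^-1` _]setTI; exact: mX.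
rewrite (probability_split (mYy y1) (mYy y2) mXI) ?law1 ?law2 ?PY1 ?PY2 //.
- by apply/seteqP; split=> // w [/= -> /eqP]; rewrite (negbTE y12).
- by rewrite -EFinD addrC subrK.
Qed.

Lemma probability_third_value {V : Type} {f : T -> V} {a b c : V} :
  a <> b -> c <> a -> c <> b -> (forall w, [\/ f w = a, f w = b | f w = c]) ->
  measurable (f @^-1` [set a]) -> measurable (f @^-1` [set b]) ->
  P (f @^-1` [set c]) = (1 - P (f @^-1` [set a]) - P (f @^-1` [set b]))%E.
Proof.
move=> ab ca cb f_val ma mb.
have -> : f @^-1` [set c] = ~` (f @^-1` [set a] `|` f @^-1` [set b]).
  apply/seteqP; split=> w /=; first by move=> -> [].
  by case: (f_val w) => -> // nab; exfalso; apply: nab; [left | right].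
rewrite probability_setC ?measureU //; last exact: measurableU.
- by rewrite oppeD; [exact: addeA | exact/fin_num_adde_defl/fin_num_measure].
- by apply/seteqP; split=> // w [/= -> ].
Qed.

End total_probability.

Section logistic.
Context {R : realType}.
Implicit Types r y z : R.

Definition logistic y : R := 1 / (1 + expR (- y)).

Definition logit r : R := ln (r / (1 - r)).

Lemma logistic_ltr : {mono logistic : y z / y < z}.
Proof.
move=> y z; rewrite /logistic !div1r ltf_pV2 ?posrE ?addr_gt0 ?expR_gt0 //.
by rewrite ltrD2l ltr_expR ltrN2.
Qed.

Lemma logitK r : 0 < r < 1 -> logistic (logit r) = r.
Proof.
case/andP => r_gt0 r_lt1.
have r_neq0 : r != 0 by rewrite gt_eqF.
have r1_neq0 : 1 - r != 0 by rewrite gt_eqF // subr_gt0.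
rewrite /logistic /logit expRN lnK ?posrE ?divr_gt0 ?subr_gt0 // invf_div.
have -> : 1 + (1 - r) / r = r^-1.
  by rewrite -{1}(divff r_neq0) -mulrDl subrKC div1r.
by rewrite div1r invrK.
Qed.

Lemma logit1B r : 0 < r < 1 -> logit (1 - r) = - logit r.
Proof.
case/andP => r_gt0 r_lt1.
by rewrite /logit subKr -invf_div lnV // posrE divr_gt0 // subr_gt0.
Qed.

Lemma lt_logistic r y : 0 < r < 1 -> (r < logistic y) = (logit r < y).
Proof. by move=> r01; rewrite -{1}(logitK r r01) logistic_ltr. Qed.

Lemma logistic_lt r y : 0 < r < 1 -> (logistic y < r) = (y < logit r).
Proof. by move=> r01; rewrite -{1}(logitK r r01) logistic_ltr. Qed.

End logistic.

Section pseudo_label.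
Context {R : realType} {beta dp mu1 mu2 rho : R}.

Lemma score_logistic x :
  score beta dp mu1 mu2 x = logistic (beta * ((x - dp) - (mu1 + mu2) / 2)).
Proof. by []. Qed.

Lemma lt_score x : 0 < beta -> 0 < rho < 1 ->
  (rho < score beta dp mu1 mu2 x) =
  (dp + (mu1 + mu2) / 2 + logit rho / beta < x).
Proof.
move=> beta_gt0 rho01.
rewrite score_logistic lt_logistic // [beta * _]mulrC -ltr_pdivrMr //.
by apply/idP/idP => ?; lra.
Qed.

Lemma score_lt x : 0 < beta -> 0 < rho < 1 ->
  (score beta dp mu1 mu2 x < 1 - rho) =
  (x < dp + (mu1 + mu2) / 2 - logit rho / beta).
Proof.
move=> beta_gt0 /[dup] rho01 /andP[rho_gt0 rho_lt1].
have rho1B01 : 0 < 1 - rho < 1 by apply/andP; split; lra.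
rewrite score_logistic logistic_lt // logit1B //.
rewrite [beta * _]mulrC -ltr_pdivlMr // mulNr.
by apply/idP/idP => ?; lra.
Qed.

Lemma pseudo_label_eq1 x : 0 < beta -> 0 < rho < 1 ->
  pseudo_label beta dp mu1 mu2 rho x = 1 <->
  dp + (mu1 + mu2) / 2 + logit rho / beta < x.
Proof.
move=> beta_gt0 rho01; rewrite /pseudo_label -/(score _ _ _ _ _) -lt_score //.
set s := score _ _ _ _ _.
by case: (ltrP rho s) => h1; case: (ltrP s (1 - rho)) => h2; split => h; lra.
Qed.

(* [1 / 2 < rho] gives [1 - rho < rho], so the test [rho < s], made first,
   never hides a score below [1 - rho]. *)
Lemma pseudo_label_eqN1 x : 0 < beta -> 1 / 2 < rho -> rho < 1 ->
  pseudo_label beta dp mu1 mu2 rho x = -1 <->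
  x < dp + (mu1 + mu2) / 2 - logit rho / beta.
Proof.
move=> beta_gt0 rho_gt_half rho_lt1.
have rho01 : 0 < rho < 1 by apply/andP; split; lra.
rewrite /pseudo_label -/(score _ _ _ _ _) -score_lt //.
set s := score _ _ _ _ _.
by case: (ltrP rho s) => h1; case: (ltrP s (1 - rho)) => h2; split => h; lra.
Qed.

End pseudo_label.

Lemma pseudo_label_cases {R : realType} (beta dp mu1 mu2 rho x : R) :
  let l := pseudo_label beta dp mu1 mu2 rho x in [\/ l = 1, l = -1 | l = 0].
Proof.
by rewrite /pseudo_label; case: ifP => _; [|case: ifP => _]; constructor.
Qed.

Theorem theorem0p1 (d : measure_display) (T : measurableType d) (R : realType)
  (P : probability T R) (X Y : T -> R)
  (gamma mu1 mu2 sigma1 sigma2 beta rho dp : R) :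
  1 / 2 < gamma -> gamma < 1 ->
  0 < sigma1 -> 0 < sigma2 -> 0 < beta ->
  1 / 2 < rho -> rho < 1 ->
  measurable_fun setT X -> measurable_fun setT Y ->
  P (Y @^-1` [set 1]) = gamma%:E ->
  P (Y @^-1` [set -1]) = (1 - gamma)%:E ->
  cond_law P X Y (-1) (normal_prob mu1 sigma1) ->
  cond_law P X Y 1 (normal_prob mu2 sigma2) ->
  let L := ln (rho / (1 - rho)) / beta in
  let Ypsl := fun w => pseudo_label beta dp mu1 mu2 rho (X w) in
  [/\ P (Ypsl @^-1` [set 1]) =
        (gamma * Phi (((mu2 - mu1) / 2 - L - dp) / sigma2)
         + (1 - gamma) * Phi (((mu1 - mu2) / 2 - L - dp) / sigma1))%:E,
      P (Ypsl @^-1` [set -1]) =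
        ((1 - gamma) * Phi (((mu2 - mu1) / 2 - L + dp) / sigma1)
         + gamma * Phi (((mu1 - mu2) / 2 - L + dp) / sigma2))%:E
    & P (Ypsl @^-1` [set 0]) =
        (1 - P (Ypsl @^-1` [set 1%R]) - P (Ypsl @^-1` [set (-1)%R]))%E].
Proof.
move=> _ _ sigma1_gt0 sigma2_gt0 beta_gt0 rho_gt_half rho_lt1 mX mY PY1 PYN1
  law1 law2 L Ypsl.
set c1 := dp + (mu1 + mu2) / 2 + L.
set c2 := dp + (mu1 + mu2) / 2 - L.
have rho01 : 0 < rho < 1 by apply/andP; split; lra.
have one_neqN1 : (1 : R) != -1 by apply/eqP; lra.
have mXI I : measurable I -> measurable (X @^-1` I).
  by move=> mI; rewrite -[_ @^-1` _]setTI; exact: mX.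
have Ypsl1 : Ypsl @^-1` [set 1] = X @^-1` `]c1, +oo[.
  apply/funext => w; apply/propext; rewrite /= in_itv /= andbT.
  exact: pseudo_label_eq1.
have YpslN1 : Ypsl @^-1` [set -1] = X @^-1` `]-oo, c2[.
  apply/funext => w; apply/propext; rewrite /= in_itv /=.
  exact: pseudo_label_eqN1.
have mixture I : measurable I ->
    P (X @^-1` I) = (gamma%:E * normal_prob mu2 sigma2 I
                     + (1 - gamma)%:E * normal_prob mu1 sigma1 I)%E.
  exact: cond_law_mixture one_neqN1 PY1 PYN1 law2 law1.
split.
- rewrite Ypsl1 mixture // !normal_prob_gt //.
  have -> : mu2 - c1 = (mu2 - mu1) / 2 - L - dp by rewrite /c1; lra.
  have -> : mu1 - c1 = (mu1 - mu2) / 2 - L - dp by rewrite /c1; lra.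
  by rewrite -!EFinM -EFinD.
- rewrite YpslN1 mixture // !normal_prob_lt //.
  have -> : c2 - mu1 = (mu2 - mu1) / 2 - L + dp by rewrite /c2; lra.
  have -> : c2 - mu2 = (mu1 - mu2) / 2 - L + dp by rewrite /c2; lra.
  by rewrite -!EFinM -EFinD addrC.
- apply: probability_third_value; try lra.
  + by move=> w; exact: pseudo_label_cases.
  + by rewrite Ypsl1; exact: mXI.
  + by rewrite YpslN1; exact: mXI.
Qed.
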